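(* Let $a,u\in\mathbb Z$ with $a\ge2$, $|u|\le a$, and let $n$ be a sufficiently large positive integer. Then all $a$ roots of the polynomial $p_u(\tau)=e^{i\pi u}n(\tau-1)^a-\tau^{a-1}$ are given by the (convergent) asymptotic expansions $$\tau_k(u)=1+\sum_{m=1}^\infty\frac{(2-m/a)_{m-1}}{m!}\cdot\frac{e^{\frac{m(2\pi k-\pi u)i}{a}}}{n^{m/a}},\qquad k=0,1,\ldots,a-1.$$
   Context: $(\lambda)_0=1$, $(\lambda)_m=\lambda(\lambda+1)\cdots(\lambda+m-1)$ is the Pochhammer symbol. *)

From Stdlib Require Import Reals List Arith Factorial.
From Coquelicot Require Import Coquelicot.
Open Scope R_scope.

Fixpoint poch (x : R) (m : nat) : R :=
  match m with
  | O => 1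
  | S m' => poch x m' * (x + INR m')
  end.

Definition cis (t : R) : C := (cos t, sin t).

Definition p_u (a : nat) (u : Z) (n : nat) (tau : C) : C :=
  (cis (PI * IZR u) * RtoC (INR n) * Cpow (tau - 1) a - Cpow tau (a - 1))%C.

Definition tau_term (a : nat) (u : Z) (n k m : nat) : C :=
  (RtoC (poch (2 - INR m / INR a) (m - 1) / INR (fact m))
   * cis (INR m * (2 * PI * INR k - PI * IZR u) / INR a)
   / RtoC (Rpower (INR n) (INR m / INR a)))%C.

Definition tau_seq (a : nat) (u : Z) (n k : nat) : nat -> C :=
  fun j => tau_term a u n k (S j).

Definition root_prod (a : nat) (r : nat -> C) (t : C) : C :=
  fold_right (fun k acc => ((t - r k) * acc)%C) (RtoC 1) (seq 0 a).

From Stdlib Require Import Reals List Lia ZArith Psatz.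
From Coquelicot Require Import Coquelicot.
Open Scope R_scope.

(* The roots are obtained from the generalised binomial series
   [T x = sum_m x/(x + m t) binom(x + m t, m) z^m] with [t = 1 - 1/a], evaluated at the
   [a]-th roots [z] of [e^{-i pi u}/n].  The Rothe-Hagen convolution identity gives
   [T x * T y = T (x + y)], and the recurrence of the coefficients gives [T 1 = 1 + z T t].
   Hence [(T 1 - 1)^a = z^a T (a t) = z^a T 1^(a-1)], i.e. [T 1] is a root of [p_u]; its
   coefficients are exactly those of the expansion [tau_k(u)].  For large [n] the [a]
   points [z] are small and pairwise about [n^{-1/a}] apart while [T 1 - 1 - z = O(z^2)],
   so the [a] values [T 1] are distinct and exhaust the roots of the degree-[a]
   polynomial [p_u]. *)

(** * Polynomial functions on C *)

Fixpoint Cpoly_eval (l : list C) (t : C) : C :=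
  match l with nil => RtoC 0 | c :: l' => (c + t * Cpoly_eval l' t)%C end.

(* polynomial functions of degree < [d] *)
Definition Cpoly (d : nat) (f : C -> C) : Prop :=
  exists l, (length l <= d)%nat /\ forall t, f t = Cpoly_eval l t.

Lemma Cpoly_ext d f g : (forall t, f t = g t) -> Cpoly d f -> Cpoly d g.
Proof. intros E [l [Hl Hf]]. exists l. split; auto. intros t; rewrite <- E; auto. Qed.

Lemma Cpoly_mono d d' f : (d <= d')%nat -> Cpoly d f -> Cpoly d' f.
Proof. intros H [l [Hl Hf]]. exists l. split; [lia | auto]. Qed.

Lemma Cpoly_const c : Cpoly 1 (fun _ => c).
Proof. exists (c :: nil). split; simpl; auto. intros t. ring. Qed.

Lemma Cpoly_zero d : Cpoly d (fun _ => RtoC 0).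
Proof. exists nil. split; simpl; [lia | auto]. Qed.

Fixpoint coef_add (l1 l2 : list C) : list C :=
  match l1, l2 with
  | nil, _ => l2
  | _, nil => l1
  | c1 :: l1', c2 :: l2' => (c1 + c2)%C :: coef_add l1' l2'
  end.

Lemma Cpoly_eval_coef_add l1 l2 t :
  Cpoly_eval (coef_add l1 l2) t = (Cpoly_eval l1 t + Cpoly_eval l2 t)%C.
Proof.
  revert l2; induction l1 as [|c1 l1 IH]; intros [|c2 l2]; simpl; try ring.
  rewrite IH. ring.
Qed.

Lemma length_coef_add l1 l2 d :
  (length l1 <= d)%nat -> (length l2 <= d)%nat -> (length (coef_add l1 l2) <= d)%nat.
Proof.
  revert l2 d; induction l1 as [|c1 l1 IH]; intros [|c2 l2] d H1 H2; simpl in *; auto.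
  destruct d as [|d]; [lia |]. specialize (IH l2 d). lia.
Qed.

Lemma Cpoly_add d f g : Cpoly d f -> Cpoly d g -> Cpoly d (fun t => f t + g t)%C.
Proof.
  intros [l1 [H1 F1]] [l2 [H2 F2]]. exists (coef_add l1 l2). split.
  - apply length_coef_add; auto.
  - intros t. rewrite Cpoly_eval_coef_add, F1, F2. auto.
Qed.

Lemma Cpoly_scal d c f : Cpoly d f -> Cpoly d (fun t => c * f t)%C.
Proof.
  intros [l [H F]]. exists (map (fun x => c * x)%C l). split.
  - rewrite length_map; auto.
  - intros t. rewrite F. clear. induction l as [|x l IH]; simpl; [ring |].
    rewrite <- IH. ring.
Qed.

Lemma Cpoly_sub d f g : Cpoly d f -> Cpoly d g -> Cpoly d (fun t => f t - g t)%C.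
Proof.
  intros Hf Hg. apply Cpoly_ext with (fun t => f t + (-1) * g t)%C; [intros; ring |].
  apply Cpoly_add; auto. apply Cpoly_scal; auto.
Qed.

Lemma Cpoly_mul_lin d f (al be : C) :
  Cpoly d f -> Cpoly (S d) (fun t => (al * t + be) * f t)%C.
Proof.
  intros [l [H F]].
  apply Cpoly_ext with (fun t => al * Cpoly_eval (RtoC 0 :: l) t + be * Cpoly_eval l t)%C.
  { intros t. simpl. rewrite F. ring. }
  apply Cpoly_add; apply Cpoly_scal.
  - exists (RtoC 0 :: l). simpl. split; [lia | auto].
  - exists l. split; [lia | auto].
Qed.

Lemma Cpoly_pow m : Cpoly (S m) (fun t => Cpow t m).
Proof.
  induction m as [|m IH].
  - apply Cpoly_ext with (fun _ => RtoC 1); [auto | apply Cpoly_const].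
  - apply Cpoly_ext with (fun t => (1 * t + 0) * Cpow t m)%C; [intros; simpl; ring |].
    apply Cpoly_mul_lin; auto.
Qed.

Lemma Cpoly_sum d (F : nat -> C -> C) n :
  (forall k, Cpoly d (F k)) -> Cpoly d (fun t => sum_n (fun k => F k t) n).
Proof.
  intros H. induction n as [|n IH].
  - apply Cpoly_ext with (F O); [intros; rewrite sum_O; auto | auto].
  - apply Cpoly_ext with (fun t => sum_n (fun k => F k t) n + F (S n) t)%C.
    { intros t. rewrite sum_Sn. auto. }
    apply Cpoly_add; auto.
Qed.

Lemma Cpoly_eval_factor (l : list C) (r : C) : exists l',
  (length l' <= length l - 1)%nat /\
  forall t, Cpoly_eval l t = (Cpoly_eval l r + (t - r) * Cpoly_eval l' t)%C.
Proof.
  induction l as [|c l IH].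
  - exists nil. split; simpl; [lia |]. intros; ring.
  - destruct IH as [l' [Hl F]]. destruct l as [|c0 l0].
    + exists nil. split; simpl; [lia |]. intros; ring.
    + exists (Cpoly_eval (c0 :: l0) r :: l'). split; [simpl in *; lia |].
      intros t. specialize (F t). cbn [Cpoly_eval] in F |- *. rewrite F. ring.
Qed.

Lemma Cpoly_factor d f r :
  Cpoly (S d) f -> exists g, Cpoly d g /\ forall t, f t = (f r + (t - r) * g t)%C.
Proof.
  intros [l [H F]]. destruct (Cpoly_eval_factor l r) as [l' [Hl G]].
  exists (Cpoly_eval l'). split.
  - exists l'. split; [lia | auto].
  - intros t. rewrite !F. apply G.
Qed.

Lemma Cpoly_eq0 (rs : list C) d (f : C -> C) :
  NoDup rs -> length rs = d -> (forall r, In r rs -> f r = RtoC 0) -> Cpoly d f ->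
  forall t, f t = RtoC 0.
Proof.
  revert d f; induction rs as [|r rs IH]; intros d f ND Hl Hr Hp t; simpl in Hl; subst d.
  - destruct Hp as [[|c l] [H F]]; simpl in H; [rewrite F; auto | lia].
  - destruct (Cpoly_factor _ _ r Hp) as [g [Hg G]].
    inversion ND as [|? ? Hnotin ND']; subst.
    assert (Hfr : f r = RtoC 0) by (apply Hr; left; auto).
    enough (Hg0 : forall t, g t = RtoC 0) by (rewrite G, Hfr, Hg0; ring).
    apply (IH (length rs)); auto. intros r' Hin.
    assert (Hne : (r' - r)%C <> RtoC 0).
    { intros E. apply Hnotin. replace r with r'; auto.
      replace r' with (r' - r + r)%C by ring. rewrite E. ring. }
    assert (E := Hr r' (or_intror Hin)). rewrite G, Hfr in E.
    replace (RtoC 0 + (r' - r) * g r')%C with ((r' - r) * g r')%C in E by ring.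
    replace (g r') with ((r' - r) * g r' / (r' - r))%C by (field; auto).
    rewrite E. unfold Cdiv. ring.
Qed.

Lemma sum_Sn_C (a : nat -> C) n : sum_n a (S n) = (sum_n a n + a (S n))%C.
Proof. rewrite sum_Sn. reflexivity. Qed.

Lemma sum_n_Cminus (a b : nat -> C) n :
  (sum_n a n - sum_n b n)%C = sum_n (fun k => a k - b k)%C n.
Proof. induction n as [|n IH]; [rewrite !sum_O; auto |]. rewrite !sum_Sn_C, <- IH. ring. Qed.

Lemma sum_n_Cmult_l c (a : nat -> C) n : (c * sum_n a n)%C = sum_n (fun k => c * a k)%C n.
Proof. induction n as [|n IH]; [rewrite !sum_O; auto |]. rewrite !sum_Sn_C, <- IH. ring. Qed.

Lemma RtoC_INR_S k : RtoC (INR (S k)) = (RtoC (INR k) + 1)%C.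
Proof. rewrite S_INR, <- RtoC_plus. auto. Qed.

Lemma RtoC_INR_fact_neq0 k : RtoC (INR (fact k)) <> RtoC 0.
Proof. intros E. apply RtoC_inj in E. apply (INR_fact_neq_0 k). auto. Qed.

(** * The Rothe-Hagen identity *)

Fixpoint Cpoch (y : C) (k : nat) : C :=
  match k with O => RtoC 1 | S k' => (Cpoch y k' * (y + RtoC (INR k')))%C end.

Lemma poch_RtoC y j : RtoC (poch y j) = Cpoch (RtoC y) j.
Proof. induction j as [|j IH]; simpl; auto. rewrite <- IH, <- RtoC_plus, <- RtoC_mult. auto. Qed.

Lemma Cpoch_S_l y k : Cpoch y (S k) = (y * Cpoch (y + 1) k)%C.
Proof.
  induction k as [|k IH]; [simpl; ring |].
  change (Cpoch y (S (S k))) with (Cpoch y (S k) * (y + RtoC (INR (S k))))%C.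
  rewrite IH. simpl Cpoch. rewrite RtoC_INR_S. ring.
Qed.

(* The coefficient [x/(x + m t) * binom(x + m t, m)] of the generalised binomial series
   [B_t(z)^x = sum_m gen_binom t x m z^m], written without the division. *)
Definition gen_binom (t x : C) (m : nat) : C :=
  match m with
  | O => RtoC 1
  | S m' => (x * Cpoch (x + t * RtoC (INR m) - RtoC (INR m) + 1) m' / RtoC (INR (fact m)))%C
  end.

Lemma gen_binom_0_S t m : gen_binom t 0 (S m) = RtoC 0.
Proof. simpl gen_binom. unfold Cdiv. ring. Qed.

Lemma gen_binom_sub1 t x n :
  (gen_binom t x (S n) - gen_binom t (x - 1) (S n) = gen_binom t (x - 1 + t) n)%C.
Proof.
  destruct n as [|n].
  - simpl. replace (RtoC (INR 1)) with (RtoC 1) by (simpl; auto). field. 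
  - unfold gen_binom.
    set (y := (x + t * RtoC (INR (S (S n))) - RtoC (INR (S (S n))) + 1)%C).
    replace (x - 1 + t * RtoC (INR (S (S n))) - RtoC (INR (S (S n))) + 1)%C with (y - 1)%C
      by (unfold y; ring).
    replace (x - 1 + t + t * RtoC (INR (S n)) - RtoC (INR (S n)) + 1)%C with y
      by (unfold y; rewrite !RtoC_INR_S; ring).
    rewrite (Cpoch_S_l (y - 1)). replace (y - 1 + 1)%C with y by ring.
    change (Cpoch y (S n)) with (Cpoch y n * (y + RtoC (INR n)))%C.
    rewrite fact_simpl, mult_INR, RtoC_mult.
    assert (Hf := RtoC_INR_fact_neq0 (S n)).
    assert (Hs : RtoC (INR (S (S n))) <> RtoC 0).
    { intros E; apply RtoC_inj in E. apply (not_0_INR (S (S n))); auto. }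
    unfold y. rewrite !RtoC_INR_S in *. field. split; auto.
Qed.

Lemma Cpoly_Cpoch k c : Cpoly (S k) (fun y => Cpoch (y + c) k).
Proof.
  revert c; induction k as [|k IH]; intros c.
  - apply Cpoly_ext with (fun _ => RtoC 1); [auto | apply Cpoly_const].
  - apply Cpoly_ext with (fun y => (1 * y + (c + RtoC (INR k))) * Cpoch (y + c) k)%C.
    { intros; simpl; ring. }
    apply Cpoly_mul_lin; auto.
Qed.

Lemma Cpoly_gen_binom t m c : Cpoly (S m) (fun y => gen_binom t (y + c) m).
Proof.
  destruct m as [|m].
  - apply Cpoly_ext with (fun _ => RtoC 1); [auto | apply Cpoly_const].
  - set (c' := (c + t * RtoC (INR (S m)) - RtoC (INR (S m)) + 1)%C).
    apply Cpoly_ext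
      with (fun y => / RtoC (INR (fact (S m))) * ((1 * y + c) * Cpoch (y + c') m))%C.
    { intros y. unfold gen_binom, c', Cdiv.
      replace (y + c + t * RtoC (INR (S m)) - RtoC (INR (S m)) + 1)%C
        with (y + (c + t * RtoC (INR (S m)) - RtoC (INR (S m)) + 1))%C by ring.
      ring. }
    apply Cpoly_scal, Cpoly_mul_lin, Cpoly_Cpoch.
Qed.

Lemma NoDup_map_INR m : NoDup (map (fun j => RtoC (INR j)) (seq 0 m)).
Proof.
  apply NoDup_map_NoDup_ForallPairs; [| apply seq_NoDup].
  intros i j _ _ E. apply RtoC_inj, INR_eq in E. auto.
Qed.

Definition rothe_hagen_defect (t x y : C) (n : nat) : C :=
  (gen_binom t (x + y) n - sum_n (fun k => gen_binom t x k * gen_binom t y (n - k)) n)%C.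

Lemma Cpoly_rothe_hagen_defect t x n : Cpoly (S n) (fun y => rothe_hagen_defect t x y n).
Proof.
  apply Cpoly_sub.
  - apply Cpoly_ext with (fun y => gen_binom t (y + x) n).
    { intros; rewrite Cplus_comm; auto. }
    apply Cpoly_gen_binom.
  - apply Cpoly_sum. intros k. apply Cpoly_scal.
    apply Cpoly_mono with (S (n - k)); [lia |].
    apply Cpoly_ext with (fun y => gen_binom t (y + 0) (n - k)).
    { intros; rewrite Cplus_0_r; auto. }
    apply Cpoly_gen_binom.
Qed.

Lemma rothe_hagen_defect_0 t x n : rothe_hagen_defect t x 0 n = RtoC 0.
Proof.
  unfold rothe_hagen_defect. destruct n as [|n]; [rewrite sum_O; simpl; ring |].
  rewrite sum_Sn_C, Nat.sub_diag, Cplus_0_r.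
  rewrite (sum_n_ext_loc _ (fun _ => RtoC 0 * RtoC 0)%C).
  - rewrite <- sum_n_Cmult_l. simpl gen_binom at 3. ring.
  - intros k Hk. replace (S n - k)%nat with (S (n - k)) by lia.
    rewrite gen_binom_0_S. simpl. ring.
Qed.

(* [gen_binom_sub1] turns the change of the defect at [n + 1] under [y -> y - 1] into the
   defect at [n], evaluated at [y - 1 + t]. *)
Lemma rothe_hagen_defect_shift t x y n :
  (forall x y, rothe_hagen_defect t x y n = RtoC 0) ->
  rothe_hagen_defect t x y (S n) = rothe_hagen_defect t x (y - 1) (S n).
Proof.
  intros IH. apply Ceq_minus. unfold rothe_hagen_defect.
  rewrite !sum_Sn_C, Nat.sub_diag.
  change (gen_binom t ?z 0) with (RtoC 1).
  assert (Hsum : forall y1,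
    sum_n (fun k => gen_binom t x k * gen_binom t y1 (S n - k))%C n
    = sum_n (fun k => gen_binom t x k * gen_binom t y1 (S (n - k)))%C n).
  { intros y1. apply sum_n_ext_loc. intros k Hk. do 2 f_equal. lia. }
  rewrite !Hsum.
  set (S1 := sum_n (fun k => gen_binom t x k * gen_binom t y (S (n - k)))%C n).
  set (S2 := sum_n (fun k => gen_binom t x k * gen_binom t (y - 1) (S (n - k)))%C n).
  assert (Hdiff : (S1 - S2)%C
                  = (gen_binom t (x + y) (S n) - gen_binom t (x + y - 1) (S n))%C).
  { rewrite gen_binom_sub1. replace (x + y - 1 + t)%C with (x + (y - 1 + t))%C by ring.
    rewrite (proj2 (Ceq_minus _ _) (IH x (y - 1 + t)%C)).
    unfold S1, S2. rewrite sum_n_Cminus. apply sum_n_ext. intros k.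
    rewrite <- gen_binom_sub1. simpl. ring. }
  replace (x + (y - 1))%C with (x + y - 1)%C by ring.
  replace (gen_binom t (x + y) (S n))
    with (gen_binom t (x + y - 1) (S n) + (S1 - S2))%C by (rewrite Hdiff; ring).
  ring.
Qed.

(* The defect is a polynomial in [y] of degree <= n which, by induction on [n], is
   invariant under [y -> y - 1] and vanishes at [0], hence at every natural number. *)
Theorem rothe_hagen t x y n :
  gen_binom t (x + y) n = sum_n (fun k => gen_binom t x k * gen_binom t y (n - k))%C n.
Proof.
  apply Ceq_minus. fold (rothe_hagen_defect t x y n). revert x y.
  induction n as [|n IH]; intros x y.
  { unfold rothe_hagen_defect. rewrite sum_O. simpl. ring. }
  assert (Hnat : forall j, rothe_hagen_defect t x (RtoC (INR j)) (S n) = RtoC 0).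
  { induction j as [|j IHj]; [apply rothe_hagen_defect_0 |].
    rewrite rothe_hagen_defect_shift, RtoC_INR_S by auto.
    replace (RtoC (INR j) + 1 - 1)%C with (RtoC (INR j)) by ring. auto. }
  apply (Cpoly_eq0 (map (fun j => RtoC (INR j)) (seq 0 (S (S n)))) (S (S n))
           (fun y => rothe_hagen_defect t x y (S n))).
  - apply NoDup_map_INR.
  - rewrite length_map, length_seq; auto.
  - intros r Hin. apply in_map_iff in Hin. destruct Hin as [j [<- _]]. apply Hnat.
  - apply Cpoly_rothe_hagen_defect.
Qed.

Definition CSeries (a : nat -> C) : C :=
  (Series (fun n => Re (a n)), Series (fun n => Im (a n))).

Lemma Re_sum_n (a : nat -> C) N : Re (sum_n a N) = sum_n (fun n => Re (a n)) N.
Proof. induction N as [|N IH]; [rewrite !sum_O; auto |]. rewrite !sum_Sn, <- IH. auto. Qed.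

Lemma Im_sum_n (a : nat -> C) N : Im (sum_n a N) = sum_n (fun n => Im (a n)) N.
Proof. induction N as [|N IH]; [rewrite !sum_O; auto |]. rewrite !sum_Sn, <- IH. auto. Qed.

Lemma Rabs_Im_le_Cmod c : Rabs (Im c) <= Cmod c.
Proof.
  destruct c as [x y]. unfold Cmod; simpl. rewrite <- sqrt_Rsqr_abs.
  apply sqrt_le_1_alt. unfold Rsqr. nra.
Qed.

Lemma Cmod_le_Rabs_Re_Im c : Cmod c <= Rabs (Re c) + Rabs (Im c).
Proof.
  destruct c as [x y]. unfold Cmod. cbn [fst snd Re Im].
  generalize (Rabs_pos x) (Rabs_pos y); intros.
  rewrite <- (sqrt_pow2 (Rabs x + Rabs y)) by lra.
  apply sqrt_le_1_alt. rewrite <- (pow2_abs x), <- (pow2_abs y). nra.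
Qed.

Section AbsolutelyConvergent.

Variable a : nat -> C.
Hypothesis Ha : ex_series (fun n => Cmod (a n)).

Lemma ex_series_Rabs_Re : ex_series (fun n => Rabs (Re (a n))).
Proof.
  apply (ex_series_le (K := R_AbsRing) (V := R_CompleteNormedModule) _ (fun n => Cmod (a n))); [| exact Ha].
  intros n. change (Rabs (Rabs (Re (a n))) <= Cmod (a n)). rewrite Rabs_Rabsolu. apply re_le_Cmod.
Qed.

Lemma ex_series_Rabs_Im : ex_series (fun n => Rabs (Im (a n))).
Proof.
  apply (ex_series_le (K := R_AbsRing) (V := R_CompleteNormedModule) _ (fun n => Cmod (a n))); [| exact Ha].
  intros n. change (Rabs (Rabs (Im (a n))) <= Cmod (a n)). rewrite Rabs_Rabsolu.
  apply Rabs_Im_le_Cmod.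
Qed.

Lemma ex_series_Re : ex_series (fun n => Re (a n)).
Proof. apply ex_series_Rabs, ex_series_Rabs_Re. Qed.

Lemma ex_series_Im : ex_series (fun n => Im (a n)).
Proof. apply ex_series_Rabs, ex_series_Rabs_Im. Qed.

Lemma is_series_CSeries : is_series a (CSeries a).
Proof.
  assert (HRe := Series_correct _ ex_series_Re). assert (HIm := Series_correct _ ex_series_Im).
  unfold is_series in *. apply filterlim_locally. intros eps.
  generalize (filter_and _ _ (proj1 (filterlim_locally _ _) HRe eps)
                             (proj1 (filterlim_locally _ _) HIm eps)).
  apply filter_imp. intros N [BRe BIm]. split.
  - change (ball (Re (CSeries a)) eps (Re (sum_n a N))). rewrite Re_sum_n. exact BRe.
  - change (ball (Im (CSeries a)) eps (Im (sum_n a N))). rewrite Im_sum_n. exact BIm.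
Qed.

Lemma CSeries_incr_1 : CSeries a = (a O + CSeries (fun n => a (S n)))%C.
Proof.
  unfold CSeries. rewrite (Series_incr_1 _ ex_series_Re), (Series_incr_1 _ ex_series_Im).
  destruct (a O); auto.
Qed.

Lemma CSeries_scal_l c : CSeries (fun n => c * a n)%C = (c * CSeries a)%C.
Proof.
  unfold CSeries. destruct c as [cr ci].
  rewrite (Series_ext _ (fun n => cr * Re (a n) - ci * Im (a n)))
    by (intros; destruct (a n); simpl; ring).
  rewrite (Series_ext (fun n => Im _) (fun n => cr * Im (a n) + ci * Re (a n)))
    by (intros; destruct (a n); simpl; ring).
  rewrite Series_minus, Series_plus, !Series_scal_l.
  - unfold Cmult; simpl. f_equal; ring.
  all: apply (ex_series_scal_l (V := R_NormedModule)); first [apply ex_series_Re | apply ex_series_Im].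
Qed.

(* The factor 2 comes from bounding the real and imaginary parts separately. *)
Lemma Cmod_CSeries_le : Cmod (CSeries a) <= 2 * Series (fun n => Cmod (a n)).
Proof.
  apply Rle_trans with (Rabs (Re (CSeries a)) + Rabs (Im (CSeries a)));
    [apply Cmod_le_Rabs_Re_Im |].
  unfold CSeries. cbn [Re Im fst snd].
  assert (H1 := Series_Rabs _ ex_series_Rabs_Re). assert (H2 := Series_Rabs _ ex_series_Rabs_Im).
  assert (H3 : Series (fun n => Rabs (Re (a n))) <= Series (fun n => Cmod (a n))).
  { apply Series_le; auto. intros; split; [apply Rabs_pos | apply re_le_Cmod]. }
  assert (H4 : Series (fun n => Rabs (Im (a n))) <= Series (fun n => Cmod (a n))).
  { apply Series_le; auto. intros; split; [apply Rabs_pos | apply Rabs_Im_le_Cmod]. }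
  lra.
Qed.

End AbsolutelyConvergent.

Lemma CSeries_ext a b : (forall n, a n = b n) -> CSeries a = CSeries b.
Proof. intros H. unfold CSeries. f_equal; apply Series_ext; intros; rewrite H; auto. Qed.

(* Cauchy product, obtained from the real one applied to the four products of parts. *)
Lemma CSeries_mult a b :
  ex_series (fun n => Cmod (a n)) -> ex_series (fun n => Cmod (b n)) ->
  (CSeries a * CSeries b)%C = CSeries (fun n => sum_n (fun k => a k * b (n - k)%nat)%C n).
Proof.
  intros Ha Hb.
  assert (Hmult : forall f g, ex_series (fun n => Rabs (f n)) -> ex_series (fun n => Rabs (g n)) ->
    is_series (fun n => sum_f_R0 (fun k => f k * g (n - k)%nat) n) (Series f * Series g)).
  { intros f g Hf Hg. apply is_series_mult; auto; apply Series_correct, ex_series_Rabs; auto. }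
  assert (RR := Hmult _ _ (ex_series_Rabs_Re a Ha) (ex_series_Rabs_Re b Hb)).
  assert (II := Hmult _ _ (ex_series_Rabs_Im a Ha) (ex_series_Rabs_Im b Hb)).
  assert (RI := Hmult _ _ (ex_series_Rabs_Re a Ha) (ex_series_Rabs_Im b Hb)).
  assert (IR := Hmult _ _ (ex_series_Rabs_Im a Ha) (ex_series_Rabs_Re b Hb)).
  unfold CSeries, Cmult at 1. cbn [fst snd]. f_equal; symmetry; apply is_series_unique.
  - generalize (is_series_minus _ _ _ _ RR II).
    apply is_series_ext. intros n. rewrite Re_sum_n, sum_n_Reals.
    change (plus ?x (opp ?y)) with (x - y). rewrite <- minus_sum. apply sum_eq.
    intros i _. destruct (a i), (b (n - i)%nat); simpl; ring.
  - generalize (is_series_plus _ _ _ _ RI IR).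
    apply is_series_ext. intros n. rewrite Im_sum_n, sum_n_Reals.
    change (plus ?x ?y) with (x + y). rewrite <- plus_sum. apply sum_eq.
    intros i _. destruct (a i), (b (n - i)%nat); simpl; ring.
Qed.

Lemma exp_pow x n : exp x ^ n = exp (INR n * x).
Proof.
  induction n as [|n IH]; [simpl; rewrite Rmult_0_l, exp_0; auto |].
  rewrite S_INR. simpl. rewrite IH, <- exp_plus. f_equal. ring.
Qed.

(* [(1 + 1/m)^m <= e <= 3] *)
Lemma succ_pow_le m : (1 <= m)%nat -> (INR m + 1) ^ m <= 3 * INR m ^ m.
Proof.
  intros Hm. assert (Hp : 0 < INR m) by (apply lt_0_INR; lia).
  replace (INR m + 1) with (INR m * (1 + / INR m)) by (field; lra).
  rewrite Rpow_mult_distr, Rmult_comm. apply Rmult_le_compat_r; [apply pow_le; lra |].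
  apply Rle_trans with (exp (/ INR m) ^ m).
  - apply pow_incr. assert (0 < / INR m) by (apply Rinv_0_lt_compat; auto). split; [lra |].
    left. apply exp_ineq1. lra.
  - rewrite exp_pow. replace (INR m * / INR m) with 1 by (field; lra). apply exp_le_3.
Qed.

Lemma pow_le_3_pow_fact m : INR m ^ m <= 3 ^ m * INR (fact m).
Proof.
  induction m as [|m IH]; [simpl; lra |].
  destruct m as [|m]; [simpl; lra |].
  set (k := S m) in *.
  rewrite S_INR, fact_simpl, mult_INR, S_INR, <- !tech_pow_Rmult.
  assert (H := succ_pow_le k ltac:(unfold k; lia)).
  assert (0 <= INR k) by apply pos_INR.
  apply Rle_trans with ((INR k + 1) * (3 * INR k ^ k)); [apply Rmult_le_compat_l; lra | nra].
Qed.

Lemma Cmod_Cpoch_le y k B : 0 <= B ->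
  (forall i, (i < k)%nat -> Cmod (y + RtoC (INR i)) <= B) -> Cmod (Cpoch y k) <= B ^ k.
Proof.
  intros HB. induction k as [|k IH]; intros H; [simpl; rewrite Cmod_1; lra |].
  simpl Cpoch. rewrite Cmod_mult. simpl pow. rewrite Rmult_comm.
  apply Rmult_le_compat; try apply Cmod_ge_0; [apply H; lia | apply IH; intros; apply H; lia].
Qed.

Lemma Cmod_gen_binom_le t x X m : 0 <= t <= 1 -> Cmod x <= X ->
  Cmod (gen_binom (RtoC t) x m) <= (X + 1) * (3 * (X + 2)) ^ m.
Proof.
  intros Ht Hx. assert (HX : 0 <= X) by (apply Rle_trans with (Cmod x); auto; apply Cmod_ge_0).
  destruct m as [|m]; [simpl; rewrite Cmod_1; lra |].
  unfold gen_binom. set (M := S m).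
  assert (HMm : INR M = INR m + 1) by apply S_INR.
  assert (Hm : 0 <= INR m) by apply pos_INR.
  assert (Hpoch :
    Cmod (Cpoch (x + RtoC t * RtoC (INR M) - RtoC (INR M) + 1) m) <= ((X + 2) * INR M) ^ m).
  { apply Cmod_Cpoch_le; [nra |]. intros i Hi.
    replace (x + RtoC t * RtoC (INR M) - RtoC (INR M) + 1 + RtoC (INR i))%C
      with (x + RtoC ((t - 1) * INR M + 1 + INR i))%C
      by (destruct x; unfold Cminus, Cplus, Cmult, Copp, RtoC; simpl; f_equal; ring).
    eapply Rle_trans; [apply Cmod_triangle |]. rewrite Cmod_R.
    assert (Hi' : INR i + 1 <= INR m) by (rewrite <- S_INR; apply le_INR; lia).
    assert (0 <= INR i) by apply pos_INR.
    apply Rle_trans with (X + INR M); [apply Rplus_le_compat; auto; apply Rabs_le; split |];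
      nra. }
  assert (HF : 0 < INR (fact M)) by (apply lt_0_INR, lt_O_fact).
  assert (HPF : INR M ^ m <= 3 ^ M * INR (fact M)).
  { apply Rle_trans with (INR M ^ M); [| apply pow_le_3_pow_fact].
    change (INR M ^ M) with (INR M * INR M ^ m).
    assert (0 <= INR M ^ m) by (apply pow_le; lra). nra. }
  assert (HXM : (X + 2) ^ m <= (X + 2) ^ M) by (apply Rle_pow; [lra | unfold M; lia]).
  rewrite Cmod_div by apply RtoC_INR_fact_neq0.
  rewrite Cmod_mult, Cmod_R, Rabs_pos_eq by apply pos_INR.
  apply Rle_trans with (X * ((X + 2) ^ m * INR M ^ m) / INR (fact M)).
  { rewrite <- Rpow_mult_distr. apply Rmult_le_compat_r; [left; apply Rinv_0_lt_compat; auto |].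
    apply Rmult_le_compat; auto; apply Cmod_ge_0. }
  assert (0 <= (X + 2) ^ m) by (apply pow_le; lra).
  apply Rle_trans with (X * ((X + 2) ^ M * 3 ^ M)).
  { unfold Rdiv. rewrite Rmult_assoc. apply Rmult_le_compat_l; auto.
    apply (Rmult_le_reg_r (INR (fact M))); auto.
    rewrite Rmult_assoc, Rinv_l, Rmult_1_r by lra. rewrite Rmult_assoc.
    apply Rmult_le_compat; auto. apply pow_le; lra. }
  rewrite Rpow_mult_distr.
  assert (0 <= (X + 2) ^ M * 3 ^ M) by (apply Rmult_le_pos; apply pow_le; lra). nra.
Qed.

(** * The generalised binomial series *)

Definition gen_binom_term (t x z : C) (m : nat) : C := (gen_binom t x m * Cpow z m)%C.

Definition gen_binom_series (t x z : C) : C := CSeries (gen_binom_term t x z).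

Lemma gen_binom_series_add t x y z :
  ex_series (fun m => Cmod (gen_binom_term t x z m)) ->
  ex_series (fun m => Cmod (gen_binom_term t y z m)) ->
  (gen_binom_series t x z * gen_binom_series t y z)%C = gen_binom_series t (x + y) z.
Proof.
  intros Hx Hy. unfold gen_binom_series. rewrite CSeries_mult by auto.
  apply CSeries_ext. intros n. unfold gen_binom_term. rewrite rothe_hagen.
  rewrite (Cmult_comm _ (Cpow z n)), sum_n_Cmult_l. apply sum_n_ext_loc. intros k Hk.
  replace (Cpow z n) with (Cpow z k * Cpow z (n - k))%C
    by (rewrite <- Cpow_add_r; f_equal; lia).
  simpl. ring.
Qed.

Section RealParameter.

Variable t : R.
Hypothesis Ht : 0 <= t <= 1.

Lemma Cmod_gen_binom_term_le x X z m : Cmod x <= X ->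
  Cmod (gen_binom_term (RtoC t) x z m) <= (X + 1) * (3 * (X + 2) * Cmod z) ^ m.
Proof.
  intros Hx. unfold gen_binom_term. rewrite Cmod_mult, Cmod_pow.
  replace ((X + 1) * (3 * (X + 2) * Cmod z) ^ m)
    with ((X + 1) * (3 * (X + 2)) ^ m * Cmod z ^ m)
    by (rewrite (Rpow_mult_distr (3 * (X + 2))); ring).
  apply Rmult_le_compat; [apply Cmod_ge_0 | apply pow_le, Cmod_ge_0 | | lra].
  apply Cmod_gen_binom_le; auto.
Qed.

Lemma ex_series_Cmod_gen_binom_term x X z : Cmod x <= X -> 3 * (X + 2) * Cmod z <= / 2 ->
  ex_series (fun m => Cmod (gen_binom_term (RtoC t) x z m)).
Proof.
  intros Hx Hz. assert (0 <= X) by (apply Rle_trans with (Cmod x); auto; apply Cmod_ge_0).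
  assert (0 <= Cmod z) by apply Cmod_ge_0.
  apply (ex_series_le (K := R_AbsRing) (V := R_CompleteNormedModule) _
           (fun m => (X + 1) * (3 * (X + 2) * Cmod z) ^ m)).
  - intros m. change (Rabs (Cmod (gen_binom_term t x z m)) <= (X + 1) * (3 * (X + 2) * Cmod z) ^ m).
    rewrite Rabs_pos_eq by apply Cmod_ge_0. apply Cmod_gen_binom_term_le; auto.
  - apply (ex_series_scal_l (V := R_NormedModule)), ex_series_geom.
    rewrite Rabs_pos_eq; nra.
Qed.

Lemma gen_binom_series_pow x X z j : (1 <= j)%nat -> 3 * (X + 2) * Cmod z <= / 2 ->
  Cmod (RtoC (INR j) * x) <= X ->
  Cpow (gen_binom_series (RtoC t) x z) j = gen_binom_series (RtoC t) (RtoC (INR j) * x) z.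
Proof.
  intros Hj1 Hz. induction j as [|j IH]; intros Hj; [lia |].
  assert (Hle : forall k, (k <= S j)%nat -> Cmod (RtoC (INR k) * x) <= X).
  { intros k Hk. eapply Rle_trans; [| exact Hj]. rewrite !Cmod_mult, !Cmod_R, !Rabs_pos_eq
      by apply pos_INR. apply Rmult_le_compat_r; [apply Cmod_ge_0 | apply le_INR; auto]. }
  destruct j as [|j].
  - simpl. rewrite Cmult_1_l, Cmult_1_r. auto.
  - assert (Hx : Cmod x <= X).
    { replace x with (RtoC (INR 1) * x)%C by (simpl; ring). apply Hle. lia. }
    rewrite Cpow_S, IH by (lia || apply Hle; lia). rewrite gen_binom_series_add.
    + f_equal. rewrite (RtoC_INR_S (S j)). ring.
    + apply ex_series_Cmod_gen_binom_term with X; auto.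
    + apply ex_series_Cmod_gen_binom_term with X; auto.
Qed.

Lemma gen_binom_series_1 z : 18 * Cmod z <= 1 ->
  gen_binom_series (RtoC t) (RtoC 1) z = (RtoC 1 + z * gen_binom_series (RtoC t) (RtoC t) z)%C.
Proof.
  intros Hz. assert (Hq : 3 * (1 + 2) * Cmod z <= / 2) by lra.
  unfold gen_binom_series.
  rewrite CSeries_incr_1 by (apply ex_series_Cmod_gen_binom_term with 1; auto; rewrite Cmod_1; lra).
  rewrite <- CSeries_scal_l.
  2: { apply ex_series_Cmod_gen_binom_term with 1; auto. rewrite Cmod_R, Rabs_pos_eq; lra. }
  f_equal; [unfold gen_binom_term; simpl; ring |].
  apply CSeries_ext. intros n. unfold gen_binom_term.
  assert (E := gen_binom_sub1 t 1 n).
  replace (RtoC 1 - 1)%C with (RtoC 0) in E by ring.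
  rewrite gen_binom_0_S, Cplus_0_l in E.
  rewrite Cpow_S, <- E. ring.
Qed.

Lemma Cmod_gen_binom_series_sub1_le x X z : Cmod x <= X -> 3 * (X + 2) * Cmod z <= / 2 ->
  Cmod (gen_binom_series (RtoC t) x z - 1) <= 4 * (X + 1) * (3 * (X + 2) * Cmod z).
Proof.
  intros Hx Hz. set (q := 3 * (X + 2) * Cmod z) in *.
  assert (0 <= X) by (apply Rle_trans with (Cmod x); auto; apply Cmod_ge_0).
  assert (0 <= q) by (unfold q; assert (0 <= Cmod z) by apply Cmod_ge_0; nra).
  assert (HA := ex_series_Cmod_gen_binom_term x X z Hx Hz).
  assert (HA' := proj1 (ex_series_incr_1 (V := R_NormedModule) _) HA).
  unfold gen_binom_series. rewrite CSeries_incr_1 by auto.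
  replace (gen_binom_term t x z 0 + CSeries (fun n => gen_binom_term t x z (S n)) - 1)%C
    with (CSeries (fun n => gen_binom_term t x z (S n))) by (unfold gen_binom_term; simpl; ring).
  eapply Rle_trans; [apply Cmod_CSeries_le; auto |].
  assert (HS : Series (fun n => Cmod (gen_binom_term t x z (S n)))
               <= Series (fun n => (X + 1) * q * q ^ n)).
  { apply Series_le.
    - intros n; split; [apply Cmod_ge_0 |].
      replace ((X + 1) * q * q ^ n) with ((X + 1) * q ^ S n) by (simpl; ring).
      apply Cmod_gen_binom_term_le; auto.
    - apply (ex_series_scal_l (V := R_NormedModule)), ex_series_geom. rewrite Rabs_pos_eq; lra. }
  rewrite Series_scal_l, Series_geom in HS by (rewrite Rabs_pos_eq; lra).
  assert (/ (1 - q) <= 2) by (replace 2 with (/ / 2) by field; apply Rinv_le_contravar; lra).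
  assert (0 <= (X + 1) * q) by nra.
  nra.
Qed.

Lemma gen_binom_series_1_sep z w : 18 * Cmod z <= 1 -> 18 * Cmod w <= 1 ->
  Cmod (z - w) - 72 * (Cmod z ^ 2 + Cmod w ^ 2)
  <= Cmod (gen_binom_series (RtoC t) (RtoC 1) z - gen_binom_series (RtoC t) (RtoC 1) w).
Proof.
  intros Hz Hw. rewrite !gen_binom_series_1 by auto.
  assert (Hdev : forall v, 18 * Cmod v <= 1 ->
    Cmod (v * (gen_binom_series (RtoC t) (RtoC t) v - 1)) <= 72 * Cmod v ^ 2).
  { intros v Hv. rewrite Cmod_mult.
    assert (Hb : Cmod (gen_binom_series t t v - 1) <= 4 * (1 + 1) * (3 * (1 + 2) * Cmod v)).
    { apply Cmod_gen_binom_series_sub1_le; [rewrite Cmod_R, Rabs_pos_eq |]; lra. }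
    assert (0 <= Cmod v) by apply Cmod_ge_0. nra. }
  assert (Hz' := Hdev z Hz). assert (Hw' := Hdev w Hw).
  set (dz := (z * (gen_binom_series t t z - 1))%C) in *.
  set (dw := (w * (gen_binom_series t t w - 1))%C) in *.
  replace (z - w)%C with ((RtoC 1 + z * gen_binom_series t t z - (RtoC 1 + w * gen_binom_series t t w))
                          - dz + dw)%C by (unfold dz, dw; ring).
  set (d := (RtoC 1 + z * gen_binom_series t t z - (RtoC 1 + w * gen_binom_series t t w))%C).
  assert (Htri : Cmod (d - dz + dw) <= Cmod d + Cmod dz + Cmod dw).
  { eapply Rle_trans; [apply Cmod_triangle |]. unfold Cminus.
    assert (H := Cmod_triangle d (- dz)). rewrite Cmod_opp in H. lra. }
  lra.
Qed.

End RealParameter.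

Section Roots.

Variable a : nat.
Hypothesis Ha : (2 <= a)%nat.

Let ta : R := 1 - / INR a.

Lemma INR_a_ge_2 : 2 <= INR a.
Proof. replace 2 with (INR 2) by (simpl; lra). apply le_INR; auto. Qed.

Lemma ta_bounds : 0 <= ta <= 1.
Proof.
  assert (HA := INR_a_ge_2). unfold ta.
  assert (0 < / INR a) by (apply Rinv_0_lt_compat; lra).
  assert (/ INR a <= 1) by (rewrite <- Rinv_1; apply Rinv_le_contravar; lra). lra.
Qed.

(* With [T x := gen_binom_series ta x z]: [T 1 - 1 = z T ta] and
   [T ta ^ a = T (a ta) = T (a - 1) = T 1 ^ (a - 1)]. *)
Lemma gen_binom_series_root z : 6 * (INR a + 2) * Cmod z <= 1 ->
  Cpow (gen_binom_series (RtoC ta) (RtoC 1) z - 1) a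
  = (Cpow z a * Cpow (gen_binom_series (RtoC ta) (RtoC 1) z) (a - 1))%C.
Proof.
  intros Hz. assert (HA := INR_a_ge_2). assert (Ht := ta_bounds).
  assert (Hq : 3 * (INR a + 2) * Cmod z <= / 2) by lra.
  assert (Hz18 : 18 * Cmod z <= 1) by (assert (0 <= Cmod z) by apply Cmod_ge_0; nra).
  rewrite (gen_binom_series_1 ta Ht z Hz18) at 1.
  replace (RtoC 1 + z * gen_binom_series ta ta z - 1)%C with (z * gen_binom_series ta ta z)%C
    by ring.
  rewrite Cpow_mult_l. f_equal.
  assert (Hta : INR a * ta = INR (a - 1) * 1) by (rewrite minus_INR by lia; unfold ta; simpl; field; lra).
  assert (Ha1 : 0 <= INR (a - 1) <= INR a) by (rewrite minus_INR by lia; simpl; lra).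
  rewrite !(gen_binom_series_pow ta Ht _ (INR a)) by
    (lia || auto || (rewrite <- RtoC_mult, Cmod_R, ?Hta, Rabs_pos_eq; lra)).
  rewrite <- !RtoC_mult, Hta. auto.
Qed.

End Roots.

Lemma cis_add x y : (cis x * cis y)%C = cis (x + y).
Proof. unfold cis, Cmult. simpl. rewrite cos_plus, sin_plus. f_equal; ring. Qed.

Lemma cis_pow x m : Cpow (cis x) m = cis (INR m * x).
Proof.
  induction m as [|m IH]; [simpl; unfold cis; rewrite Rmult_0_l, cos_0, sin_0; auto |].
  rewrite Cpow_S, IH, cis_add, S_INR. f_equal. ring.
Qed.

Lemma Cmod_cis x : Cmod (cis x) = 1.
Proof.
  unfold Cmod, cis. cbn [fst snd]. rewrite <- sqrt_1. f_equal.
  generalize (sin2_cos2 x). unfold Rsqr. intros; nra.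
Qed.

Lemma cis_2PI_INR k : cis (2 * PI * INR k) = RtoC 1.
Proof.
  unfold cis. replace (2 * PI * INR k) with (0 + 2 * INR k * PI) by ring.
  rewrite cos_period, sin_period, cos_0, sin_0. auto.
Qed.

Lemma Cmod_cis_sub1 x : Cmod (cis x - 1) = sqrt (2 - 2 * cos x).
Proof. unfold Cmod, cis. simpl. f_equal. generalize (sin2_cos2 x). unfold Rsqr. intros. nra. Qed.

Lemma cos_le_cos_2PI_div a d : (1 <= d)%nat -> (d < a)%nat ->
  cos (2 * PI * INR d / INR a) <= cos (2 * PI / INR a).
Proof.
  intros Hd Hda. assert (HP := PI_RGT_0).
  assert (Hd1 : 1 <= INR d) by (replace 1 with (INR 1) by (simpl; lra); apply le_INR; auto).
  assert (Hd2 : INR d + 1 <= INR a) by (rewrite <- S_INR; apply le_INR; lia).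
  assert (Hdecr : forall x y, 0 <= x -> x <= y -> y <= PI -> cos y <= cos x).
  { intros x y Hx Hxy Hy. destruct (Req_dec x y) as [-> | Hne]; [lra |].
    left; apply cos_decreasing_1; lra. }
  assert (H2a : 2 * PI / INR a <= PI).
  { apply (Rmult_le_reg_r (INR a)); [lra |]. unfold Rdiv.
    rewrite Rmult_assoc, Rinv_l by lra. nra. }
  assert (Hlow : forall e, 1 <= e -> 2 * PI / INR a <= 2 * PI * e / INR a).
  { intros e He. unfold Rdiv. apply Rmult_le_compat_r; [left; apply Rinv_0_lt_compat; lra | nra]. }
  assert (0 <= 2 * PI / INR a) by (unfold Rdiv; apply Rmult_le_pos; [lra | left; apply Rinv_0_lt_compat; lra]).
  destruct (Rle_dec (2 * PI * INR d / INR a) PI) as [Hle | Hgt].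
  - apply Hdecr; auto.
  - (* use the symmetry [cos (2 pi - x) = cos x] to bring the angle back into [0, pi] *)
    replace (2 * PI * INR d / INR a) with (- (2 * PI * (INR a - INR d) / INR a) + 2 * INR 1 * PI)
      by (simpl; field; lra).
    rewrite cos_period, cos_neg. apply Hdecr; auto; [apply Hlow; lra |].
    apply Rnot_le_lt in Hgt. left. apply (Rmult_lt_reg_r (INR a)); [lra |].
    apply (Rmult_lt_compat_r (INR a)) in Hgt; [| lra].
    unfold Rdiv in *. rewrite Rmult_assoc, Rinv_l in * by lra. nra.
Qed.

(* the minimal distance between two distinct [a]-th roots of unity *)
Definition root_gap (a : nat) : R := sqrt (2 - 2 * cos (2 * PI / INR a)).

Lemma root_gap_pos a : (2 <= a)%nat -> 0 < root_gap a.
Proof.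
  intros Ha. unfold root_gap. apply sqrt_lt_R0.
  assert (HA : 2 <= INR a) by (replace 2 with (INR 2) by (simpl; lra); apply le_INR; auto).
  assert (HP := PI_RGT_0).
  assert (cos (2 * PI / INR a) < cos 0); [| rewrite cos_0 in *; lra].
  apply cos_decreasing_1; try lra.
  - unfold Rdiv. apply Rmult_le_pos; [lra | left; apply Rinv_0_lt_compat; lra].
  - apply (Rmult_le_reg_r (INR a)); [lra |]. unfold Rdiv.
    rewrite Rmult_assoc, Rinv_l by lra. nra.
  - unfold Rdiv. apply Rmult_lt_0_compat; [lra | apply Rinv_0_lt_compat; lra].
Qed.

Lemma root_gap_le a th j k : (2 <= a)%nat -> (j < a)%nat -> (k < a)%nat -> j <> k ->
  root_gap a <= Cmod (cis (th + 2 * PI * INR j / INR a) - cis (th + 2 * PI * INR k / INR a)).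
Proof.
  intros Ha Hj Hk Hjk.
  assert (HA : 0 < INR a) by (apply lt_0_INR; lia).
  replace (cis (th + 2 * PI * INR j / INR a) - cis (th + 2 * PI * INR k / INR a))%C
    with (cis (th + 2 * PI * INR k / INR a) * (cis (2 * PI * (INR j - INR k) / INR a) - 1))%C.
  2: { replace (th + 2 * PI * INR j / INR a)
         with (th + 2 * PI * INR k / INR a + 2 * PI * (INR j - INR k) / INR a) by (field; lra).
       rewrite <- (cis_add (th + 2 * PI * INR k / INR a)). ring. }
  rewrite Cmod_mult, Cmod_cis, Rmult_1_l, Cmod_cis_sub1. apply sqrt_le_1_alt.
  enough (cos (2 * PI * (INR j - INR k) / INR a) <= cos (2 * PI / INR a)) by lra.
  destruct (Nat.lt_ge_cases k j).
  - rewrite <- minus_INR by lia. apply cos_le_cos_2PI_div; lia.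
  - replace (2 * PI * (INR j - INR k) / INR a) with (- (2 * PI * (INR k - INR j) / INR a))
      by (field; lra).
    rewrite cos_neg, <- minus_INR by lia. apply cos_le_cos_2PI_div; lia.
Qed.

Lemma Cpoly_fold_prod_sub_pow (L : list nat) (r : nat -> C) :
  Cpoly (length L)
    (fun t => fold_right (fun k acc => ((t - r k) * acc)%C) (RtoC 1) L - Cpow t (length L))%C.
Proof.
  induction L as [|k L IH]; simpl.
  - apply Cpoly_ext with (fun _ => RtoC 0); [intros; simpl; ring | apply Cpoly_zero].
  - apply Cpoly_ext with (fun t => (- r k) * Cpow t (length L)
      + (1 * t + - r k) * (fold_right (fun k acc => ((t - r k) * acc)%C) (RtoC 1) L
                           - Cpow t (length L)))%C.
    { intros t. ring. }
    apply Cpoly_add; [apply Cpoly_scal, Cpoly_pow | apply Cpoly_mul_lin; auto].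
Qed.

Lemma Cpoly_root_prod_sub_pow a r : Cpoly a (fun t => root_prod a r t - Cpow t a)%C.
Proof.
  assert (H := Cpoly_fold_prod_sub_pow (seq 0 a) r). rewrite length_seq in H. exact H.
Qed.

Lemma root_prod_root a r k : (k < a)%nat -> root_prod a r (r k) = RtoC 0.
Proof.
  intros Hk. unfold root_prod. assert (Hin : In k (seq 0 a)) by (apply in_seq; lia).
  induction (seq 0 a) as [|j L IH]; simpl; [contradiction |].
  destruct Hin as [-> | Hin]; [ring | rewrite IH by auto; ring].
Qed.

Lemma root_prod_eq a (f : C -> C) (c : C) (r : nat -> C) :
  Cpoly a (fun t => f t - c * Cpow t a)%C ->
  (forall j k, (j < a)%nat -> (k < a)%nat -> j <> k -> r j <> r k) ->
  (forall k, (k < a)%nat -> f (r k) = RtoC 0) ->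
  forall t, f t = (c * root_prod a r t)%C.
Proof.
  intros Hf Hr Hroot t. apply Ceq_minus.
  apply (Cpoly_eq0 (map r (seq 0 a)) a (fun t => f t - c * root_prod a r t)%C).
  - apply NoDup_map_NoDup_ForallPairs; [| apply seq_NoDup].
    intros i j Hi Hj E. apply in_seq in Hi, Hj.
    destruct (Nat.eq_dec i j); auto. exfalso. apply (Hr i j); auto; lia.
  - rewrite length_map, length_seq; auto.
  - intros x Hin. apply in_map_iff in Hin. destruct Hin as [k [<- Hk]]. apply in_seq in Hk.
    rewrite Hroot, root_prod_root by lia. ring.
  - apply Cpoly_ext with (fun t => (f t - c * Cpow t a) - c * (root_prod a r t - Cpow t a))%C.
    { intros; ring. }
    apply Cpoly_sub; [auto | apply Cpoly_scal, Cpoly_root_prod_sub_pow].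
Qed.

Lemma Cpoly_pow_sub1_sub_pow m : Cpoly m (fun t => Cpow (t - 1) m - Cpow t m)%C.
Proof.
  induction m as [|m IH]; simpl.
  - apply Cpoly_ext with (fun _ => RtoC 0); [intros; simpl; ring | apply Cpoly_zero].
  - apply Cpoly_ext with (fun t => (-1) * Cpow t m + (1 * t + -1) * (Cpow (t - 1) m - Cpow t m))%C.
    { intros t. ring. }
    apply Cpoly_add; [apply Cpoly_scal, Cpoly_pow | apply Cpoly_mul_lin; auto].
Qed.

Lemma Cpoly_p_u_sub_lead a u n : (1 <= a)%nat ->
  Cpoly a (fun t => p_u a u n t - cis (PI * IZR u) * RtoC (INR n) * Cpow t a)%C.
Proof.
  intros Ha. unfold p_u.
  apply Cpoly_ext with (fun t => cis (PI * IZR u) * RtoC (INR n) * (Cpow (t - 1) a - Cpow t a)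
                                 - Cpow t (a - 1))%C.
  { intros t. ring. }
  apply Cpoly_sub; [apply Cpoly_scal, Cpoly_pow_sub1_sub_pow |].
  replace a with (S (a - 1)) at 1 by lia. apply Cpoly_pow.
Qed.

(** * The expansions of the roots *)

(* the [a]-th roots of [e^{-i pi u} / n] *)
Definition zeta (a : nat) (u : Z) (n k : nat) : C :=
  (cis ((2 * PI * INR k - PI * IZR u) / INR a) * RtoC (/ Rpower (INR n) (/ INR a)))%C.

Lemma Rpower_inv_le_eventually a e : (1 <= a)%nat -> 0 < e ->
  exists N, forall n, (N <= n)%nat -> (1 <= n)%nat -> / Rpower (INR n) (/ INR a) <= e.
Proof.
  intros Ha He. assert (HA : 0 < INR a) by (apply lt_0_INR; lia).
  assert (Hie : 0 < / e) by (apply Rinv_0_lt_compat; auto).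
  destruct (INR_unbounded ((/ e) ^ a)) as [N HN]. exists N. intros n HNn Hn.
  assert (HNn' : INR N <= INR n) by (apply le_INR; auto).
  assert (Hpow : 0 < (/ e) ^ a) by (apply pow_lt; auto).
  assert (Hroot : / e <= Rpower (INR n) (/ INR a)).
  { replace (/ e) with (Rpower ((/ e) ^ a) (/ INR a)).
    - apply Rle_Rpower_l; [left; apply Rinv_0_lt_compat; lra | lra].
    - rewrite <- Rpower_pow, Rpower_mult by auto.
      replace (INR a * / INR a) with 1 by (field; lra). apply Rpower_1; auto. }
  rewrite <- (Rinv_inv e). apply Rinv_le_contravar; auto.
Qed.

Section Expansion.

Variables (a : nat) (u : Z) (n : nat).
Hypotheses (Ha : (2 <= a)%nat) (Hn : (1 <= n)%nat).

Let eps : R := / Rpower (INR n) (/ INR a).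

Lemma eps_pos : 0 < eps.
Proof. apply Rinv_0_lt_compat. unfold Rpower. apply exp_pos. Qed.

Lemma Cmod_zeta k : Cmod (zeta a u n k) = eps.
Proof.
  assert (He := eps_pos). unfold zeta. fold eps.
  rewrite Cmod_mult, Cmod_cis, Cmod_R, Rabs_pos_eq; lra.
Qed.

Lemma zeta_pow k : (cis (PI * IZR u) * RtoC (INR n) * Cpow (zeta a u n k) a)%C = RtoC 1.
Proof.
  assert (HA := INR_a_ge_2 a Ha). assert (HN : 0 < INR n) by (apply lt_0_INR; lia).
  unfold zeta. rewrite Cpow_mult_l, cis_pow, <- RtoC_pow, pow_inv, <- Rpower_pow
    by (unfold Rpower; apply exp_pos).
  rewrite Rpower_mult. replace (/ INR a * INR a) with 1 by (field; lra). rewrite Rpower_1 by auto.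
  replace (INR a * ((2 * PI * INR k - PI * IZR u) / INR a)) with (2 * PI * INR k - PI * IZR u)
    by (field; lra).
  replace (cis (PI * IZR u) * RtoC (INR n) * (cis (2 * PI * INR k - PI * IZR u) * RtoC (/ INR n)))%C
    with (cis (PI * IZR u) * cis (2 * PI * INR k - PI * IZR u) * (RtoC (INR n) * RtoC (/ INR n)))%C
    by ring.
  rewrite cis_add, <- RtoC_mult, Rinv_r by lra.
  replace (PI * IZR u + (2 * PI * INR k - PI * IZR u)) with (2 * PI * INR k) by ring.
  rewrite cis_2PI_INR. ring.
Qed.

Lemma Cmod_zeta_sub_ge j k : (j < a)%nat -> (k < a)%nat -> j <> k ->
  root_gap a * eps <= Cmod (zeta a u n j - zeta a u n k).
Proof.
  intros Hj Hk Hjk. assert (HA := INR_a_ge_2 a Ha). assert (He := eps_pos).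
  unfold zeta. fold eps.
  replace (cis ((2 * PI * INR j - PI * IZR u) / INR a) * RtoC eps
           - cis ((2 * PI * INR k - PI * IZR u) / INR a) * RtoC eps)%C
    with ((cis ((2 * PI * INR j - PI * IZR u) / INR a)
           - cis ((2 * PI * INR k - PI * IZR u) / INR a)) * RtoC eps)%C by ring.
  rewrite Cmod_mult, Cmod_R, Rabs_pos_eq by lra.
  apply Rmult_le_compat_r; [lra |].
  replace ((2 * PI * INR j - PI * IZR u) / INR a)
    with (- PI * IZR u / INR a + 2 * PI * INR j / INR a) by (field; lra).
  replace ((2 * PI * INR k - PI * IZR u) / INR a)
    with (- PI * IZR u / INR a + 2 * PI * INR k / INR a) by (field; lra).
  apply root_gap_le; auto.
Qed.

(* The parameter [1 - 1/a] makes [(2 - m/a)_(m-1)] the Pochhammer factor of [gen_binom]. *)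
Lemma tau_term_gen_binom_term k j :
  tau_term a u n k (S j) = gen_binom_term (RtoC (1 - / INR a)) (RtoC 1) (zeta a u n k) (S j).
Proof.
  assert (HA := INR_a_ge_2 a Ha). assert (HN : 0 < INR n) by (apply lt_0_INR; lia).
  unfold tau_term, gen_binom_term, gen_binom, zeta. set (m := S j).
  replace (m - 1)%nat with j by (unfold m; lia).
  replace (RtoC 1 + RtoC (1 - / INR a) * RtoC (INR m) - RtoC (INR m) + 1)%C
    with (RtoC (2 - INR m / INR a))
    by (rewrite <- RtoC_mult, <- !RtoC_plus, <- RtoC_minus, <- RtoC_plus; f_equal; field; lra).
  rewrite <- poch_RtoC, Cpow_mult_l, cis_pow, <- RtoC_pow, pow_inv, <- Rpower_pow
    by (unfold Rpower; apply exp_pos).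
  rewrite Rpower_mult.
  replace (/ INR a * INR m) with (INR m / INR a) by (field; lra).
  replace (INR m * ((2 * PI * INR k - PI * IZR u) / INR a))
    with (INR m * (2 * PI * INR k - PI * IZR u) / INR a) by (field; lra).
  assert (HP : 0 < Rpower (INR n) (INR m / INR a)) by (unfold Rpower; apply exp_pos).
  assert (HF : 0 < INR (fact m)) by (apply lt_0_INR, lt_O_fact).
  rewrite RtoC_div, RtoC_inv by lra.
  field. split; intros E; apply RtoC_inj in E; lra.
Qed.

Let tau (k : nat) : C := gen_binom_series (RtoC (1 - / INR a)) (RtoC 1) (zeta a u n k).

Hypothesis Heps_small : 6 * (INR a + 2) * eps <= 1.

Lemma is_series_tau_seq k : is_series (tau_seq a u n k) (tau k - 1)%C.
Proof.
  assert (Ht := ta_bounds a Ha). assert (HA := INR_a_ge_2 a Ha). assert (He := eps_pos).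
  assert (Hser := is_series_CSeries _
    (ex_series_Cmod_gen_binom_term _ Ht (RtoC 1) 1 (zeta a u n k)
       ltac:(rewrite Cmod_1; lra) ltac:(rewrite Cmod_zeta; nra))).
  apply is_series_ext with (fun j => gen_binom_term (RtoC (1 - / INR a)) (RtoC 1) (zeta a u n k) (S j)).
  { intros j. unfold tau_seq. rewrite tau_term_gen_binom_term. auto. }
  apply is_series_incr_1.
  match goal with |- is_series _ ?L => replace L with (tau k) end; [exact Hser |].
  unfold gen_binom_term. simpl. change plus with Cplus. ring.
Qed.

Lemma p_u_tau k : p_u a u n (tau k) = RtoC 0.
Proof.
  unfold p_u, tau.
  rewrite gen_binom_series_root by (auto; rewrite Cmod_zeta; lra).
  rewrite Cmult_assoc, zeta_pow. ring.
Qed.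

Hypothesis Heps_gap : 200 * eps <= root_gap a.

Lemma tau_inj j k : (j < a)%nat -> (k < a)%nat -> j <> k -> tau j <> tau k.
Proof.
  intros Hj Hk Hjk E. assert (He := eps_pos). assert (HA := INR_a_ge_2 a Ha).
  assert (Hz : forall i, 18 * Cmod (zeta a u n i) <= 1) by (intros; rewrite Cmod_zeta; nra).
  assert (Hsep := gen_binom_series_1_sep _ (ta_bounds a Ha) _ _ (Hz j) (Hz k)).
  fold (tau j) (tau k) in Hsep. rewrite E, !Cmod_zeta in Hsep.
  replace (tau k - tau k)%C with (RtoC 0) in Hsep by ring. rewrite Cmod_0 in Hsep.
  assert (Hgap := Cmod_zeta_sub_ge j k Hj Hk Hjk).
  nra.
Qed.

End Expansion.

Theorem lemma7 (a : nat) (u : Z) :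
  (2 <= a)%nat -> (Z.abs u <= Z.of_nat a)%Z ->
  exists N : nat, forall n : nat, (N <= n)%nat -> (1 <= n)%nat ->
    exists tau : nat -> C,
      (forall k : nat, (k < a)%nat -> is_series (tau_seq a u n k) (tau k - 1)%C) /\
      (forall t : C,
         p_u a u n t = (cis (PI * IZR u) * RtoC (INR n) * root_prod a tau t)%C).
Proof.
  intros Ha _.
  assert (HA : 0 < INR a) by (apply lt_0_INR; lia).
  assert (Hgap := root_gap_pos a Ha).
  destruct (Rpower_inv_le_eventually a (Rmin (/ (6 * (INR a + 2))) (root_gap a / 200)))
    as [N HN]; [lia | apply Rmin_glb_lt; [apply Rinv_0_lt_compat |]; lra |].
  exists N. intros n HNn Hn.
  assert (Heps := HN n HNn Hn).
  assert (Hsmall : 6 * (INR a + 2) * / Rpower (INR n) (/ INR a) <= 1).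
  { apply Rle_trans with (6 * (INR a + 2) * / (6 * (INR a + 2))); [| right; field; lra].
    apply Rmult_le_compat_l; [lra |]. eapply Rle_trans; [exact Heps | apply Rmin_l]. }
  assert (Hsep : 200 * / Rpower (INR n) (/ INR a) <= root_gap a).
  { assert (H := Rle_trans _ _ _ Heps (Rmin_r _ _)). lra. }
  exists (fun k => gen_binom_series (RtoC (1 - / INR a)) (RtoC 1) (zeta a u n k)). split.
  - intros k _. apply is_series_tau_seq; auto.
  - apply root_prod_eq; [apply Cpoly_p_u_sub_lead; lia | |].
    + intros j k Hj Hk Hjk. apply tau_inj; auto.
    + intros k _. apply p_u_tau; auto.
Qed.
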